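(* For every integer $n\ge 2$ and every set $V$ of $n$ positive integers, there exists $v\in V$ such that $\kappa(V\setminus\{v\})\ge\frac1n$.
   Context: For $x\in\mathbb{R}$, $\|x\|=\min\{x-\lfloor x\rfloor,\lceil x\rceil-x\}$ denotes the distance from $x$ to the nearest integer. For a finite nonempty set $V$ of positive integers, $\kappa(V)=\sup_{t\in(0,1)}\min_{v\in V}\|tv\|$. *)

From HB Require Import structures.
From mathcomp Require Import all_boot all_order all_algebra.
From mathcomp Require Import finmap.
From mathcomp Require Import all_classical all_reals.
Set Implicit Arguments. Unset Strict Implicit. Unset Printing Implicit Defensive.
Import Order.TTheory GRing.Theory Num.Theory.
Local Open Scope ring_scope.
Local Open Scope classical_set_scope.

Definition dnint {R : realType} (x : R) : R :=
  Num.min (x - (Num.floor x)%:~R) ((Num.ceil x)%:~R - x).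

(* min_{v in V} ||t v||, for a finite set V of naturals.  The seed value 1 is
   irrelevant when V is nonempty, since ||.|| <= 1/2 < 1. *)
Definition minnorm {R : realType} (V : {fset nat}) (t : R) : R :=
  \big[Num.min/1]_(v <- V) dnint (t * v%:R).

Definition kappa {R : realType} (V : {fset nat}) : R :=
  sup [set x : R | exists t : R, 0 < t < 1 /\ x = minnorm V t].

From HB Require Import structures.
From mathcomp Require Import all_boot all_order all_algebra.
From mathcomp Require Import finmap.
From mathcomp Require Import all_classical all_reals.
From mathcomp Require Import zify ring.
Set Implicit Arguments. Unset Strict Implicit. Unset Printing Implicit Defensive.
Import Order.TTheory GRing.Theory Num.Theory.
Local Open Scope ring_scope.

(* Let P be the product of the elements of V and N = n P.  For v in V, call a
   multiplier j bad for v when j v mod N lies within P of 0 or N.  Since v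
   divides P, j v mod N only depends on j modulo N / v, and in each such period
   fewer than 2 P / v residues are bad; so each v has at most 2 P - 2 bad
   multipliers among 1, ..., N - 1.  The n (2 P - 2) bad pairs are fewer than
   twice the N - 1 multipliers, hence some j is bad for at most one v.  Removing
   that v, every remaining w satisfies ||(j / N) w|| >= P / N = 1 / n. *)

Section Counting.
Local Open Scope nat_scope.

Definition far_mod (P N a : nat) : bool := P <= a %% N <= N - P.

Lemma far_mod_mulr P N a v : 0 < v -> far_mod (P * v) (N * v) (a * v) = far_mod P N a.
Proof. by move=> v0; rewrite /far_mod -muln_modl -mulnBl !leq_pmul2r. Qed.

Lemma count_iota0_ltn m k : count (fun i => i < k) (iota 0 m) = minn k m.
Proof.
elim: m => [|m IH]; first by rewrite /= minn0.
by rewrite -[m.+1]addn1 iotaD count_cat IH /=; case: ltnP; lia.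
Qed.

Lemma count_iota0_gtn m k : count (fun i => k < i) (iota 0 m) = m - minn m k.+1.
Proof.
elim: m => [|m IH] //.
by rewrite -[m.+1]addn1 iotaD count_cat IH /=; case: ltnP; lia.
Qed.

Lemma count_iota_periodic (a : pred nat) M k : (forall i, a (i + M) = a i) ->
  count a (iota 0 (k * M)) = k * count a (iota 0 M).
Proof.
move=> aM; elim: k => [|k IH] //.
rewrite !mulSn iotaD count_cat add0n.
have -> : iota M (k * M) = map (addn M) (iota 0 (k * M)) by rewrite -iotaDl addn0.
by rewrite count_map (eq_count (a2 := a)) ?IH // => i /=; rewrite addnC aM.
Qed.

Lemma count_not_far_mod_period {Q M} : Q <= M ->
  count (fun i => ~~ far_mod Q M i) (iota 0 M) <= 2 * Q - 1.
Proof.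
move=> QM; rewrite (eq_in_count (a2 := predU (fun i => i < Q) (fun i => M - Q < i))).
  have := count_predUI (fun i => i < Q) (fun i => M - Q < i) (iota 0 M).
  rewrite count_iota0_ltn count_iota0_gtn => H.
  set c := count (predU _ _) _ in H *; lia.
move=> i; rewrite mem_iota /far_mod => /andP[_ iM].
by rewrite modn_small //= negb_and -!ltnNge.
Qed.

Lemma count_not_far_mod_multipliers n P v : 0 < n -> 0 < P -> 0 < v -> v %| P ->
  count (fun j => ~~ far_mod P (n * P) (j * v)) (iota 1 (n * P - 1)) <= 2 * P - 2.
Proof.
move=> n0 P0 v0 /dvdnP[Q defP].
have Q0 : 0 < Q by move: P0; rewrite defP muln_gt0 => /andP[].
have iota0E : iota 0 (n * P) = 0 :: iota 1 (n * P - 1).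
  by rewrite -[X in iota 0 X](@subnKC 1) // muln_gt0 n0 P0.
have := count_not_far_mod_period (leq_pmull Q n0).
rewrite -(leq_pmul2l v0) -count_iota_periodic; last by move=> i; rewrite /far_mod modnDr.
rewrite (mulnCA v n Q) (mulnC v Q) -defP iota0E /= {1}/far_mod mod0n.
rewrite [Q <= 0]leqNgt Q0 /= => bound.
rewrite (eq_count (a2 := fun j => ~~ far_mod Q (n * Q) j)); last first.
  by move=> j; rewrite /= defP mulnA far_mod_mulr.
have : v * (2 * Q - 1) = 2 * P - v by rewrite mulnBr muln1 defP; lia.
lia.
Qed.

Lemma count_sum_bool (T : Type) (a : pred T) (s : seq T) :
  count a s = \sum_(x <- s) a x.
Proof. by rewrite -sumn_count sumnE big_map. Qed.

(* Double counting of the pairs related by [r]. *)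
Lemma has_count_le1 (T U : eqType) (r : T -> U -> bool) (t : seq T) (s : seq U) b :
  (forall u, u \in s -> count (r^~ u) t <= b) -> size s * b < 2 * size t ->
  has (fun x => count (r x) s <= 1) t.
Proof.
move=> rb; apply: contraTT => /hasPn t2; rewrite -leqNgt.
have -> : 2 * size t = \sum_(x <- t) 2 by rewrite big_const_seq count_predT iter_addn_0 mulnC.
apply: (@leq_trans (\sum_(x <- t) count (r x) s)).
  by rewrite big_seq [X in _ <= X]big_seq leq_sum // => x /t2; rewrite -ltnNge.
under eq_bigr do rewrite count_sum_bool.
have -> : size s * b = \sum_(u <- s) b by rewrite big_const_seq count_predT iter_addn_0 mulnC.
by rewrite exchange_big big_seq [X in _ <= X]big_seq leq_sum // => u /rb; rewrite -count_sum_bool.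
Qed.

Lemma count_le1_rem (T : eqType) (a : pred T) (s : seq T) : uniq s -> 0 < size s ->
  count a s <= 1 -> exists2 x, x \in s & {in rem x s, forall y, ~~ a y}.
Proof.
move=> s_uniq s_nil a1; case: (boolP (has a s)) => [/hasP[x xs ax] | /hasPn s_a].
  exists x => // y yrem; apply: contraTN a1 => ay.
  rewrite (permP (perm_to_rem xs)) /= ax -ltnNge ltnS -has_count.
  by apply/hasP; exists y.
case: s s_nil {s_uniq a1} s_a => // x s _ s_a; exists x; first exact: mem_head.
by move=> y; rewrite /= eqxx => ys; apply: s_a; rewrite in_cons ys orbT.
Qed.

End Counting.

Section NearestInteger.
Variable R : realType.

Lemma dnint_ge_dist (x c : R) : (forall z : int, c <= `|x - z%:~R|) -> c <= dnint x.
Proof.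
move=> cx; rewrite /dnint le_min; apply/andP; split.
  by have := cx (Num.floor x); rewrite ger0_norm // subr_ge0 floor_le.
by have := cx (Num.ceil x); rewrite ler0_norm ?opprB // subr_le0 ceil_ge.
Qed.

Lemma far_mod_dist P N a (z : int) : (0 < P)%N -> far_mod P N a ->
  (P%:Z <= `|a%:Z - z * N%:Z|)%R.
Proof.
move=> P0 /andP[Pr rNP]; have rN : (a %% N < N)%N by rewrite ltn_mod; lia.
have -> : a%:Z - z * N%:Z = (a %% N)%:Z + ((a %/ N)%:Z - z) * N%:Z.
  by rewrite {1}(divn_eq a N) PoszD PoszM mulrBl; ring.
move: ((a %/ N)%:Z - z) (a %% N)%N Pr rNP rN => k r Pr rNP rN.
case: (ltrgtP k 0) => [k_lt0|k_gt0|->].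
- have : k * N%:Z <= - N%:Z by nia.
  lia.
- have : N%:Z <= k * N%:Z by nia.
  lia.
- by rewrite mul0r addr0; lia.
Qed.

Lemma dnint_far_mod P N a : (0 < P)%N -> far_mod P N a ->
  P%:R / N%:R <= dnint (a%:R / N%:R : R).
Proof.
move=> P0 aPN; have N0 : (0 < N)%N by move: aPN => /andP[]; lia.
apply: dnint_ge_dist => z.
rewrite -[z%:~R](mulfK (_ : N%:R != 0 :> R)) ?pnatr_eq0 -?lt0n // -mulrBl.
rewrite normrM normfV normr_nat ler_pM2r ?invr_gt0 ?ltr0n //.
by move: (@far_mod_dist P N a z P0 aPN); rewrite -(ler_int R) intr_norm intrB intrM.
Qed.

Lemma minnorm_ge (V : {fset nat}) (t c : R) : c <= 1 ->
  (forall v, v \in V -> c <= dnint (t * v%:R)) -> c <= minnorm V t.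
Proof. by move=> c1 cV; rewrite /minnorm big_seq le_bigmin. Qed.

Lemma minnorm_le_kappa (V : {fset nat}) (t : R) : 0 < t < 1 -> minnorm V t <= kappa V.
Proof.
move=> t01; apply: ub_le_sup; last by exists t.
by exists 1 => _ [s [_ ->]]; apply: bigmin_le_id.
Qed.

End NearestInteger.

Theorem mainTheorem7 (R : realType) (n : nat) (V : {fset nat}) :
  (2 <= n)%N -> #|` V| = n -> (forall v, v \in V -> (0 < v)%N) ->
  exists v, v \in V /\ 1 / n%:R <= kappa (R := R) (V `\ v)%fset.
Proof.
move=> n2 Vn Vpos; set P := (\prod_(v <- V) v)%N; set N := (n * P)%N.
have P0 : (0 < P)%N by rewrite /P big_seq prodn_cond_gt0.
pose bad j v := ~~ far_mod P N (j * v).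
have /hasP[j jN j_bad1] : has (fun j => count (bad j) V <= 1)%N (iota 1 (N - 1)).
  apply: (@has_count_le1 _ _ bad _ V (2 * P - 2)%N); last first.
    by rewrite size_iota -[size _]/#|` V| Vn /N; nia.
  move=> v vV; apply: count_not_far_mod_multipliers => //; [lia | exact: Vpos |].
  by rewrite /P (big_rem v) //= dvdn_mulr.
have V_gt0 : (0 < size V)%N by rewrite -[size _]/#|` V| Vn; lia.
have [v vV far_others] := count_le1_rem (fset_uniq V) V_gt0 j_bad1.
exists v; split => //; move: jN; rewrite mem_iota => /andP[j0 jN].
apply: le_trans (minnorm_le_kappa _ (t := j%:R / N%:R) _); last first.
  by rewrite divr_gt0 ?ltr0n ?ltr_pdivrMr ?mul1r ?ltr_nat ?ltr0n //; lia.
apply: minnorm_ge => [|w]; first by rewrite ler_pdivrMr ?mul1r ?ler1n ?ltr0n //; lia.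
rewrite in_fsetD1 => /andP[wv wV]; rewrite mulrAC -natrM.
have -> : 1 / n%:R = P%:R / N%:R :> R.
  by rewrite /N natrM; field; rewrite !pnatr_eq0 -!lt0n P0; lia.
apply: dnint_far_mod => //; rewrite -[far_mod _ _ _]negbK far_others //.
by rewrite (mem_rem_uniq _ (fset_uniq V)) inE wv.
Qed.
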